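(* For a commutative ring $R$ with identity, the following are equivalent: (1) $R$ has a unique prime ideal; (2) $R\setminus\mathfrak{N}(R)=U(R)$; (3) $R\propto M$ is semi-complemented for every $R$-module $M$.
   Context: $\mathfrak{N}(R)$ is the nilradical, $U(R)$ the group of units, $\mathrm{reg}(A)$ the regular elements of a ring $A$. The trivial extension $R\propto M$ is $R\times M$ with coordinatewise addition and $(r,m)(s,n)=(rs,rn+sm)$. A ring $A$ is semi-complemented if for every $x\in A\setminus\mathfrak{N}(A)$ there is $y$ with $xy=0$ and $x+y\in\mathrm{reg}(A)$. *)

From HB Require Import structures.
From mathcomp Require Import all_boot all_order all_algebra.
Set Implicit Arguments.
Unset Strict Implicit.
Unset Printing Implicit Defensive.
Import Order.TTheory GRing.Theory Num.Theory.
Local Open Scope ring_scope.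

(* Subsets of a ring are Prop-valued predicates (no decidability assumed). *)

Definition nilpotent_elt (A : comNzRingType) (x : A) : Prop :=
  exists n : nat, x ^+ n = 0.

Definition unit_elt (A : comNzRingType) (x : A) : Prop :=
  exists y : A, x * y = 1.

Definition regular_elt (A : comNzRingType) (x : A) : Prop :=
  forall y : A, x * y = 0 -> y = 0.

Definition is_ideal (A : comNzRingType) (P : A -> Prop) : Prop :=
  [/\ P 0,
      (forall u v, P u -> P v -> P (u + v)) &
      (forall a u, P u -> P (a * u))].

Definition is_prime_ideal (A : comNzRingType) (P : A -> Prop) : Prop :=
  [/\ is_ideal P, ~ P 1 & (forall u v, P (u * v) -> P u \/ P v)].

Definition unique_prime_ideal (A : comNzRingType) : Prop :=
  exists P : A -> Prop, is_prime_ideal P /\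
    forall Q : A -> Prop, is_prime_ideal Q -> forall x, Q x <-> P x.

Definition semi_complemented (A : comNzRingType) : Prop :=
  forall x : A, ~ nilpotent_elt x ->
    exists y : A, x * y = 0 /\ regular_elt (x + y).

Section TrivExt.
Variables (R : comNzRingType) (M : lmodType R).

Definition triv_ext : Type := (R * M)%type.

HB.instance Definition _ := GRing.Zmodule.on triv_ext.

Definition te_one : triv_ext := (1, 0).
Definition te_mul (a b : triv_ext) : triv_ext :=
  (a.1 * b.1, a.1 *: b.2 + b.1 *: a.2).

Lemma te_mulA : associative te_mul.
Proof.
move=> [r m] [s n] [t p]; rewrite /te_mul /=; congr (_, _); first by rewrite mulrA.
rewrite !scalerDr !scalerA addrA; congr (_ + _); first by rewrite (mulrC t r).
by rewrite mulrC.
Qed.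

Lemma te_mulC : commutative te_mul.
Proof. by move=> [r m] [s n]; rewrite /te_mul /= mulrC addrC. Qed.

Lemma te_mul1 : left_id te_one te_mul.
Proof. by move=> [r m]; rewrite /te_mul /= mul1r scale1r scaler0 addr0. Qed.

Lemma te_mulDl : left_distributive te_mul +%R.
Proof.
move=> [r m] [s n] [t p]; rewrite /te_mul /= mulrDl scalerDl scalerDr.
by congr (_, _); rewrite -!addrA; congr (_ + _); rewrite addrCA.
Qed.

Lemma te_one_neq0 : te_one != 0.
Proof. by apply/negP => /eqP [] /eqP; rewrite oner_eq0. Qed.

HB.instance Definition _ := GRing.Zmodule_isComNzRing.Build triv_ext
  te_mulA te_mulC te_mul1 te_mulDl te_one_neq0.

End TrivExt.

Notation "R ∝ M" := (@triv_ext R M) (at level 40).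

From HB Require Import structures.
From mathcomp Require Import all_boot all_order all_algebra.
From mathcomp Require Import boolp classical_sets.
From mathcomp Require Import ring.

(* Every non-nilpotent element of R avoids some prime ideal (an ideal maximal
   among those disjoint from its powers is prime, by Zorn), and every non-unit
   lies in some prime ideal; so if R has a unique prime ideal, its
   non-nilpotent elements are units. Conversely, if they are, the nilradical is
   prime, contained in every prime and containing every non-unit.
   In that case an element (r, m) of R ∝ M with r non-nilpotent is a unit, hence
   regular, and y = 0 complements it. Conversely, if x is neither nilpotent nor
   a unit, take M = R/xR: a complement (y, n) of (x, 1) satisfies y 1 = x n = 0
   in M, so the regular element (x + y, 1 + n) kills (0, 1), forcing 1 = 0 in
   R/xR, i.e. x is a unit. *)

Import GRing.Theory.
Set Implicit Arguments.
Unset Strict Implicit.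
Unset Printing Implicit Defensive.
Local Open Scope ring_scope.
Local Open Scope classical_set_scope.
Local Open Scope quotient_scope.

Section Elements.
Variable R : comNzRingType.
Implicit Types x y : R.

Lemma nilpotentD x y : nilpotent_elt x -> nilpotent_elt y -> nilpotent_elt (x + y).
Proof.
move=> [a xa] [b yb]; exists (a + b)%N; rewrite exprDn big1 // => -[i /= _] _.
have [le_bi|lt_ib] := leqP b i.
  by rewrite -(subnKC le_bi) exprD yb mul0r mulr0 mul0rn.
have le_a : (a <= a + b - i)%N by rewrite -addnBA ?leq_addr // ltnW.
by rewrite -(subnKC le_a) exprD xa !mul0r mul0rn.
Qed.

Lemma nilpotentMl x y : nilpotent_elt y -> nilpotent_elt (x * y).
Proof. by move=> [n yn]; exists n; rewrite exprMn yn mulr0. Qed.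

Lemma unit_eltM x y : unit_elt x -> unit_elt y -> unit_elt (x * y).
Proof. by move=> [a xa] [b yb]; exists (a * b); rewrite mulrACA xa yb mulr1. Qed.

Lemma unit_elt_not_nilpotent x : unit_elt x -> ~ nilpotent_elt x.
Proof.
move=> [y xy] [n xn]; have /eqP := congr1 (fun z => z ^+ n) xy.
by rewrite /= exprMn xn mul0r expr1n eq_sym oner_eq0.
Qed.

Lemma unit_elt_regular x : unit_elt x -> regular_elt x.
Proof. by move=> [a xa] y xy; rewrite -[y]mul1r -xa mulrAC xy mul0r. Qed.

Definition principal_ideal x : R -> Prop := fun a => exists t, a = x * t.

Lemma principal_idealP x : is_ideal (principal_ideal x).
Proof.
split; first by exists 0; rewrite mulr0.
  by move=> _ _ [s ->] [t ->]; exists (s + t); rewrite mulrDr.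
by move=> a _ [t ->]; exists (a * t); rewrite mulrCA.
Qed.

Lemma principal_ideal_id x : principal_ideal x x.
Proof. by exists 1; rewrite mulr1. Qed.

Lemma principal_ideal1 x : principal_ideal x 1 -> unit_elt x.
Proof. by move=> [t xt]; exists t. Qed.

Lemma is_ideal_nilradical : is_ideal (@nilpotent_elt R).
Proof.
split; [by exists 1%N; rewrite expr1 | exact: nilpotentD | exact: nilpotentMl].
Qed.

Lemma prime_ideal_nilpotent (Q : R -> Prop) x :
  is_prime_ideal Q -> nilpotent_elt x -> Q x.
Proof.
move=> [[Q0 _ _] Q1 Qprime] [n xn]; have : Q (x ^+ n) by rewrite xn.
elim: n {xn} => [|n IHn]; first by rewrite expr0 => /Q1.
by rewrite exprS => /Qprime [].
Qed.

End Elements.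

Section IdealConstructions.
Variable R : comNzRingType.
Implicit Types (A : set R) (F : set (set R)).

Lemma bigcup_chain_addr_closed F :
  (forall A, F A -> forall u v, A u -> A v -> A (u + v)) -> total_on F subset ->
  forall u v, (\bigcup_(A in F) A) u -> (\bigcup_(A in F) A) v ->
    (\bigcup_(A in F) A) (u + v).
Proof.
move=> FD Fchain u v [A1 FA1 uA1] [A2 FA2 vA2].
have [A1A2|A2A1] := Fchain _ _ FA1 FA2.
  by exists A2 => //; apply: FD => //; exact: A1A2.
by exists A1 => //; apply: FD => //; exact: A2A1.
Qed.

Lemma bigcup_mulr_closed F :
  (forall A, F A -> forall a u, A u -> A (a * u)) ->
  forall a u, (\bigcup_(A in F) A) u -> (\bigcup_(A in F) A) (a * u).
Proof. by move=> FM a u [A FA uA]; exists A => //; exact: FM. Qed.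

Definition ideal_adjoin A (w : R) : set R :=
  fun z => exists a r, A a /\ z = a + w * r.

Lemma is_ideal_adjoin A w : is_ideal A -> is_ideal (ideal_adjoin A w).
Proof.
move=> [A0 AD AM]; split.
- by exists 0, 0; rewrite mulr0 addr0.
- move=> _ _ [a1 [r1 [Aa1 ->]]] [a2 [r2 [Aa2 ->]]].
  by exists (a1 + a2), (r1 + r2); split; [exact: AD | rewrite mulrDr addrACA].
- move=> c _ [a [r [Aa ->]]].
  by exists (c * a), (c * r); split; [exact: AM | rewrite mulrDr mulrCA].
Qed.

Lemma sub_ideal_adjoin A w : A `<=` ideal_adjoin A w.
Proof. by move=> a Aa; exists a, 0; rewrite mulr0 addr0. Qed.

Lemma ideal_adjoin_id A w : is_ideal A -> ideal_adjoin A w w.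
Proof. by case=> A0 _ _; exists 0, 1; rewrite add0r mulr1. Qed.

End IdealConstructions.

Section PrimeAvoidance.
Variables (R : comNzRingType) (S J : set R).
Hypotheses (S1 : S 1) (SM : forall a b, S a -> S b -> S (a * b)).
Hypotheses (J_ideal : is_ideal J) (JS : forall a, J a -> ~ S a).

Definition ideal_avoiding (A : set R) :=
  [/\ is_ideal A, J `<=` A & forall a, A a -> ~ S a].

Lemma exists_maximal_ideal_avoiding :
  exists A, ideal_avoiding A /\ forall B, A `<` B -> ~ ideal_avoiding B.
Proof.
(* [set0] is allowed only so that the empty chain has an upper bound. *)
pose P A := A = set0 \/ ideal_avoiding A.
have P_avoiding A a : P A -> A a -> ideal_avoiding A by case=> // ->.
have [A [PA Amax]] : exists A, P A /\ forall B, A `<` B -> ~ P B.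
  apply: Zorn_bigcup => F FP Fchain.
  have [[A0 [FA0 avA0]]|] := pselect (exists A, F A /\ ideal_avoiding A).
    have [_ JA0 _] := avA0.
    right; split; first split.
    - by exists A0 => //; apply: JA0; case: J_ideal.
    - by apply: bigcup_chain_addr_closed => // A /FP [-> //|[[]]].
    - by apply: bigcup_mulr_closed => A /FP [-> //|[[]]].
    - by move=> a /JA0 ?; exists A0.
    - by move=> a [A FA Aa]; case: (P_avoiding _ _ (FP _ FA) Aa) => _ _; apply.
  move=> noav; left; apply/seteqP; split => // a [A FA Aa].
  by apply: noav; exists A; split => //; exact: P_avoiding (FP _ FA) Aa.
exists A; case: PA => [A0|avA].
  exfalso; apply: (Amax J); last by right; split.
  by rewrite A0; split => // /(_ 0); apply; case: J_ideal.
by split => // B /Amax nPB avB; apply: nPB; right.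
Qed.

Lemma maximal_ideal_avoiding_prime A :
  ideal_avoiding A -> (forall B, A `<` B -> ~ ideal_avoiding B) -> is_prime_ideal A.
Proof.
move=> [A_ideal JA AS] Amax; have [_ AD AM] := A_ideal.
split => //; first by move/AS; apply.
move=> u v Auv; apply: contrapT => /not_orP[nAu nAv].
have meetS w : ~ A w -> exists2 s, S s & ideal_adjoin A w s.
  move=> nAw; apply: contrapT => noS; apply: (Amax (ideal_adjoin A w)).
    split; first exact: sub_ideal_adjoin.
    by move=> /(_ w (ideal_adjoin_id w A_ideal)).
  split; first exact: is_ideal_adjoin.
    by move=> a /JA; exact: sub_ideal_adjoin.
  by move=> s As Ss; apply: noS; exists s.
have [s1 Ss1 [a1 [r1 [Aa1 def_s1]]]] := meetS _ nAu.
have [s2 Ss2 [a2 [r2 [Aa2 def_s2]]]] := meetS _ nAv.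
apply: (AS _ _ (SM Ss1 Ss2)); rewrite def_s1 def_s2.
have -> : (a1 + u * r1) * (a2 + v * r2) =
    (a2 + v * r2) * a1 + (u * r1 * a2 + r1 * r2 * (u * v)) by ring.
by apply: (AD); [|apply: (AD)]; exact: AM.
Qed.

Lemma exists_prime_ideal_avoiding :
  exists Q, [/\ is_prime_ideal Q, J `<=` Q & forall a, Q a -> ~ S a].
Proof.
have [A [avA Amax]] := exists_maximal_ideal_avoiding.
have [_ JA AS] := avA; exists A; split => //.
exact: maximal_ideal_avoiding_prime.
Qed.

End PrimeAvoidance.

Section QuotientByPrincipalIdeal.
Variables (R : comNzRingType) (x : R).

Definition principal_pred : {pred R} := fun a => `[< principal_ideal x a >].

Lemma principal_predP a : reflect (principal_ideal x a) (a \in principal_pred).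
Proof. exact: asboolP. Qed.

Lemma principal_pred_zmod_closed : zmod_closed principal_pred.
Proof.
have [I0 ID IM] := principal_idealP x.
split => [|a b /principal_predP Ia /principal_predP Ib]; apply/principal_predP.
  exact: I0.
by apply: ID => //; rewrite -mulN1r; exact: IM.
Qed.

HB.instance Definition _ := GRing.isZmodClosed.Build R principal_pred
  principal_pred_zmod_closed.

Definition quot_principal := Quotient.quot principal_pred.
HB.instance Definition _ := ZmodQuotient.on quot_principal.
Local Notation Q := quot_principal.

Lemma eqmod_principal a b : (\pi_Q a = \pi_Q b) <-> principal_ideal x (a - b).
Proof.
by split=> [/eqquotP/principal_predP | ?]; last exact/eqquotP/principal_predP.
Qed.

Definition quot_principal_scale (r : R) (q : Q) : Q := \pi_Q (r * repr q).

Lemma quot_principal_scale_pi r a :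
  quot_principal_scale r (\pi_Q a) = \pi_Q (r * a).
Proof.
apply/eqmod_principal; rewrite -mulrBr.
have [_ _ IM] := principal_idealP x; apply: IM; apply/eqmod_principal.
by rewrite reprK.
Qed.

Lemma quot_principal_scaleA a b q :
  quot_principal_scale a (quot_principal_scale b q) =
  quot_principal_scale (a * b) q.
Proof. by elim/(@quotW _ Q): q => q; rewrite !quot_principal_scale_pi mulrA. Qed.

Lemma quot_principal_scale1 : left_id 1 quot_principal_scale.
Proof. by elim/(@quotW _ Q) => q; rewrite quot_principal_scale_pi mul1r. Qed.

Lemma quot_principal_scaleDr : right_distributive quot_principal_scale +%R.
Proof.
move=> a; elim/(@quotW _ Q) => u; elim/(@quotW _ Q) => v.
by rewrite -raddfD !quot_principal_scale_pi -raddfD mulrDr.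
Qed.

Lemma quot_principal_scaleDl q : {morph quot_principal_scale^~ q : a b / a + b}.
Proof.
move=> a b; elim/(@quotW _ Q): q => q.
by rewrite !quot_principal_scale_pi -raddfD mulrDl.
Qed.

HB.instance Definition _ := GRing.Zmodule_isLmodule.Build R Q
  quot_principal_scaleA quot_principal_scale1 quot_principal_scaleDr
  quot_principal_scaleDl.

Lemma quot_principal_annihilated (q : Q) : x *: q = 0.
Proof.
elim/(@quotW _ Q): q => q; rewrite [LHS]quot_principal_scale_pi.
by rewrite -(raddf0 \pi_Q); apply/eqmod_principal; exists q; rewrite subr0.
Qed.

Lemma quot_principal_pi1 : \pi_Q 1 = 0 -> unit_elt x.
Proof.
by rewrite -(raddf0 \pi_Q) => /eqmod_principal[t]; rewrite subr0; exists t.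
Qed.

End QuotientByPrincipalIdeal.

Section TrivialExtension.
Variables (R : comNzRingType) (M : lmodType R).
Implicit Types a b : R ∝ M.

Lemma triv_ext_mulE a b : a * b = (a.1 * b.1, a.1 *: b.2 + b.1 *: a.2).
Proof. by []. Qed.

Lemma triv_ext_fst_exp a n : (a ^+ n).1 = a.1 ^+ n.
Proof. by elim: n => [|n IHn]; rewrite ?expr0 // !exprS -IHn. Qed.

Lemma triv_ext_nilpotent a : nilpotent_elt a <-> nilpotent_elt a.1.
Proof.
split=> [[n an]|[n rn]]; first by exists n; rewrite -triv_ext_fst_exp an.
have an1 : (a ^+ n).1 = 0 by rewrite triv_ext_fst_exp.
by exists (n * 2)%N; rewrite exprM expr2 triv_ext_mulE an1 mul0r !scale0r addr0.
Qed.

Lemma triv_ext_unit a : unit_elt a.1 -> unit_elt a.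
Proof.
case: a => r m [s rs]; exists (s, - (s * s) *: m).
by rewrite triv_ext_mulE /= rs scalerA mulrN mulrA rs mul1r scaleNr addNr.
Qed.

Lemma semi_complemented_triv_ext :
  (forall r : R, ~ nilpotent_elt r -> unit_elt r) -> semi_complemented (R ∝ M).
Proof.
move=> nil_unit a /triv_ext_nilpotent /nil_unit /triv_ext_unit ua.
by exists 0; rewrite mulr0 addr0; split => //; exact: unit_elt_regular.
Qed.

Lemma semi_complemented_triv_ext_annihilated (x : R) :
  semi_complemented (R ∝ M) -> ~ nilpotent_elt x -> (forall m : M, x *: m = 0) ->
  forall m : M, m = 0.
Proof.
move=> scM nx xM0 m; pose a : R ∝ M := (x, m).
have /scM[[y n] [/(congr1 snd) /= e2 reg]] : ~ nilpotent_elt a.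
  by move/triv_ext_nilpotent.
rewrite xM0 add0r in e2.
suff /reg /(congr1 snd) : (a + (y, n)) * ((0, m) : R ∝ M) = 0 by [].
by rewrite triv_ext_mulE /= mulr0 scale0r addr0 scalerDl xM0 e2 addr0.
Qed.

End TrivialExtension.

Section UniquePrimeIdeal.
Variable R : comNzRingType.
Implicit Type x : R.

Lemma is_ideal0 : is_ideal [set 0 : R].
Proof. by split=> [|u v -> ->|a u ->]; rewrite ?addr0 ?mulr0. Qed.

Lemma prime_ideal_avoiding_nonnilpotent x :
  ~ nilpotent_elt x -> exists2 Q, is_prime_ideal Q & ~ Q x.
Proof.
move=> nx; have [|||Q [Qprime _ Qpow]] := @exists_prime_ideal_avoiding R
    (fun a => exists n, a = x ^+ n) [set 0] _ _ is_ideal0.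
- by exists 0%N.
- by move=> _ _ [m ->] [n ->]; exists (m + n)%N; rewrite exprD.
- by move=> _ -> [n xn]; apply: nx; exists n.
by exists Q => // Qx; apply: (Qpow x Qx); exists 1%N.
Qed.

Lemma prime_ideal_containing_nonunit x :
  ~ unit_elt x -> exists2 Q, is_prime_ideal Q & Q x.
Proof.
move=> ux; have [|||Q [Qprime xQ _]] := @exists_prime_ideal_avoiding R
    [set 1] (principal_ideal x) _ _ (principal_idealP x).
- by [].
- by move=> _ _ -> ->; rewrite mulr1.
- by move=> _ /[swap] -> /principal_ideal1.
by exists Q => //; apply: xQ; exact: principal_ideal_id.
Qed.

Lemma unique_prime_ideal_nonnilpotent_unit :
  unique_prime_ideal R -> forall x, ~ nilpotent_elt x -> unit_elt x.
Proof.
move=> [P [_ uniqP]] x nx; apply: contrapT => ux.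
have [Q1 Q1prime nQ1x] := prime_ideal_avoiding_nonnilpotent nx.
have [Q2 Q2prime Q2x] := prime_ideal_containing_nonunit ux.
by apply/nQ1x/(uniqP _ Q1prime)/(uniqP _ Q2prime).
Qed.

End UniquePrimeIdeal.

Section NilradicalPrime.
Variable R : comNzRingType.
Hypothesis nil_unit : forall x : R, ~ nilpotent_elt x -> unit_elt x.

Lemma nilradical_prime_ideal : is_prime_ideal (@nilpotent_elt R).
Proof.
split; first exact: is_ideal_nilradical.
  by apply: unit_elt_not_nilpotent; exists 1; rewrite mulr1.
move=> u v nuv; apply: contrapT => /not_orP[/nil_unit uu /nil_unit uv].
exact: unit_elt_not_nilpotent (unit_eltM uu uv) nuv.
Qed.

Lemma nilradical_unique_prime_ideal : unique_prime_ideal R.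
Proof.
exists (@nilpotent_elt R); split=> [|Q Qprime x].
  exact: nilradical_prime_ideal.
split=> [Qx|]; last exact: prime_ideal_nilpotent.
have [[_ _ QM] Q1 _] := Qprime.
apply: contrapT => /nil_unit[y xy]; apply: Q1.
by rewrite -xy mulrC; exact: QM.
Qed.

End NilradicalPrime.

Theorem mainTheorem13 (R : comNzRingType) :
  (unique_prime_ideal R <->
     (forall x : R, ~ nilpotent_elt x <-> unit_elt x)) /\
  ((forall x : R, ~ nilpotent_elt x <-> unit_elt x) <->
     (forall M : lmodType R, semi_complemented (triv_ext M))).
Proof.
have units_iff : (forall x : R, ~ nilpotent_elt x -> unit_elt x) ->
    forall x : R, ~ nilpotent_elt x <-> unit_elt x.
  by move=> nil_unit x; split; [exact: nil_unit | exact: unit_elt_not_nilpotent].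
split; split => [H|H].
- exact/units_iff/unique_prime_ideal_nonnilpotent_unit.
- by apply: nilradical_unique_prime_ideal => x /H.
- by move=> M; apply: semi_complemented_triv_ext => x /H.
- apply: units_iff => x nx; apply: quot_principal_pi1.
  exact: semi_complemented_triv_ext_annihilated (H _) nx
    (@quot_principal_annihilated R x) _.
Qed.
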